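(* Let $q,t$ be nonzero complex numbers, neither a root of unity, with $\arg q,\arg t\in[0,2\pi)$. For $h\in\mathbb{C}$ put $D(q,t,h)=\{(r,s)\in\mathbb{Z}_{\ge1}^2: h^2=h_{r,s}^2\}$, where $h_{r,s}=t^{r/2}q^{-s/2}+t^{-r/2}q^{s/2}$. Then $\#D(q,t,h)\le1$ for every $h\in\mathbb{C}$ in each of the following cases: (i) $|q|\ne1$ and either $\log|t|/\log|q|\notin\mathbb{Q}$ or $\arg t-\arg q\cdot\frac{\log|t|}{\log|q|}\notin2\pi\mathbb{Q}$; (ii) $|q|\ne1$, $|t|=1$ and $\arg t\notin2\pi\mathbb{Q}$; (iii) $|q|=1$, $|t|\ne1$ and $\arg q\notin2\pi\mathbb{Q}$.
   Context: Here $h_{r,s}^2=(t^{r}q^{-s})+2+(t^{r}q^{-s})^{-1}$, so $h_{r,s}^2$ does not depend on the choice of square roots $t^{1/2},q^{1/2}$. *)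

From Stdlib Require Import Reals ZArith.
Open Scope R_scope.

Definition Cplx : Type := (R * R)%type.
Definition C0 : Cplx := (0, 0).
Definition C1 : Cplx := (1, 0).
Definition RtoC (x : R) : Cplx := (x, 0).
Definition Cadd (z w : Cplx) : Cplx := (fst z + fst w, snd z + snd w).
Definition Cmul (z w : Cplx) : Cplx :=
  (fst z * fst w - snd z * snd w, fst z * snd w + snd z * fst w).
Definition Cinv (z : Cplx) : Cplx :=
  let d := fst z * fst z + snd z * snd z in (fst z / d, - snd z / d).
Fixpoint Cpow (z : Cplx) (n : nat) : Cplx :=
  match n with O => C1 | S m => Cmul z (Cpow z m) end.
Definition Cnorm (z : Cplx) : R := sqrt (fst z * fst z + snd z * snd z).

Definition is_arg (z : Cplx) (theta : R) : Prop :=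
  0 <= theta < 2 * PI /\ z = (Cnorm z * cos theta, Cnorm z * sin theta).

Definition root_of_unity (z : Cplx) : Prop := exists n : nat, (0 < n)%nat /\ Cpow z n = C1.

Definition is_rational (x : R) : Prop :=
  exists p d : Z, d <> 0%Z /\ x = IZR p / IZR d.
Definition in_2piQ (x : R) : Prop := exists y : R, is_rational y /\ x = 2 * PI * y.

(* h_{r,s}^2 = (t^r q^{-s}) + 2 + (t^r q^{-s})^{-1} *)
Definition hrs2 (q t : Cplx) (r s : nat) : Cplx :=
  let z := Cmul (Cpow t r) (Cinv (Cpow q s)) in
  Cadd (Cadd z (RtoC 2)) (Cinv z).

Definition inD (q t h : Cplx) (r s : nat) : Prop :=
  (1 <= r)%nat /\ (1 <= s)%nat /\ Cmul h h = hrs2 q t r s.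

(* Writing z = t^r q^-s, one has h_{r,s}^2 = z + 2 + 1/z, and z + 1/z = w + 1/w forces
   z = w or z w = 1.  Two points of D(q,t,h) therefore give a monomial identity
   t^a q^b = t^c q^d with (a,b) <> (c,d) (in the second alternative a = r1 + r2 > 0, c = 0).
   In polar coordinates such an identity is an integer relation between log|t| and log|q|
   together with one between arg t and arg q modulo 2 pi; each of the three hypotheses
   rules out every nontrivial relation of this kind. *)
From Pilot Require Import Defs.
From Stdlib Require Import Reals ZArith Lra Lia Classical.
From Coquelicot Require Complex.
Open Scope R_scope.

Definition log_independent (l1 l2 a1 a2 : R) : Prop :=
  forall m n k : Z, IZR m * l1 = IZR n * l2 ->
    IZR m * a1 - IZR n * a2 = 2 * PI * IZR k -> m = 0%Z /\ n = 0%Z.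

Lemma log_independent_sym l1 l2 a1 a2 :
  log_independent l1 l2 a1 a2 -> log_independent l2 l1 a2 a1.
Proof.
  intros Hind m n k Hl Ha.
  destruct (Hind n m (- k)%Z) as [Hn Hm]; [lra | rewrite opp_IZR; lra |].
  split; assumption.
Qed.

Lemma is_rational_IZR_div (p d : Z) : d <> 0%Z -> is_rational (IZR p / IZR d).
Proof. intro Hd. exists p, d. split; [exact Hd | reflexivity]. Qed.

Lemma IZR_mul_eq0 (n : Z) (l : R) : l <> 0 -> IZR n * l = 0 -> n = 0%Z.
Proof.
  intros Hl E. apply eq_IZR. destruct (Rmult_integral _ _ E); [assumption | contradiction].
Qed.

Lemma log_independent_of_ratio l1 l2 a1 a2 : l2 <> 0 ->
  (forall m n k : Z, m <> 0%Z -> l1 / l2 = IZR n / IZR m ->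
     a1 - a2 * (l1 / l2) = 2 * PI * (IZR k / IZR m) -> False) ->
  log_independent l1 l2 a1 a2.
Proof.
  intros Hl2 Hratio m n k Hl Ha.
  destruct (Z.eq_dec m 0) as [Hm | Hm].
  - subst m. split; [reflexivity |].
    apply (IZR_mul_eq0 n l2 Hl2). rewrite <- Hl. ring.
  - exfalso. assert (HmR : IZR m <> 0) by (apply not_0_IZR; exact Hm).
    assert (Hq : l1 / l2 = IZR n / IZR m) by (field_simplify_eq; [lra | tauto]).
    apply (Hratio m n k Hm Hq). rewrite Hq. field_simplify_eq; [lra | exact HmR].
Qed.

Lemma log_independent_irrational l1 l2 a1 a2 : l2 <> 0 ->
  ~ is_rational (l1 / l2) -> log_independent l1 l2 a1 a2.
Proof.
  intros Hl2 Hirr. apply log_independent_of_ratio; [exact Hl2 |].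
  intros m n k Hm Hq _. apply Hirr. rewrite Hq. apply is_rational_IZR_div, Hm.
Qed.

Lemma log_independent_arg l1 l2 a1 a2 : l2 <> 0 ->
  ~ in_2piQ (a1 - a2 * (l1 / l2)) -> log_independent l1 l2 a1 a2.
Proof.
  intros Hl2 Hirr. apply log_independent_of_ratio; [exact Hl2 |].
  intros m n k Hm _ Ha. apply Hirr.
  exists (IZR k / IZR m). split; [apply is_rational_IZR_div, Hm | exact Ha].
Qed.

Lemma log_independent_of_cases (rq rt argq argt : R) : 0 < rq -> 0 < rt ->
  ( (rq <> 1 /\ (~ is_rational (ln rt / ln rq) \/ ~ in_2piQ (argt - argq * (ln rt / ln rq))))
    \/ (rq <> 1 /\ rt = 1 /\ ~ in_2piQ argt)
    \/ (rq = 1 /\ rt <> 1 /\ ~ in_2piQ argq) ) ->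
  log_independent (ln rt) (ln rq) argt argq.
Proof.
  intros Hrq Hrt [[Hq [Hirr | Harg]] | [[Hq [Ht Harg]] | [Hq [Ht Harg]]]].
  - apply log_independent_irrational; [apply ln_neq_0 |]; assumption.
  - apply log_independent_arg; [apply ln_neq_0 |]; assumption.
  - apply log_independent_arg; [apply ln_neq_0; assumption |].
    rewrite Ht, ln_1.
    replace (argt - argq * (0 / ln rq)) with argt by (field; apply ln_neq_0; assumption).
    exact Harg.
  - apply log_independent_sym, log_independent_arg; [apply ln_neq_0; assumption |].
    rewrite Hq, ln_1.
    replace (argq - argt * (0 / ln rt)) with argq by (field; apply ln_neq_0; assumption).
    exact Harg.
Qed.

Lemma Cnorm_pos (z : Cplx) : z <> C0 -> 0 < Cnorm z.
Proof.
  destruct z as [x y]. intro Hz. unfold Cnorm; simpl. apply sqrt_lt_R0.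
  destruct (Req_dec x 0) as [-> | Hx]; [destruct (Req_dec y 0) as [-> | Hy] |].
  - contradiction.
  - nra.
  - nra.
Qed.

(* A module, so that importing Coquelicot's complex numbers does not shadow [Cinv], [Cpow]
   and [RtoC] of [Defs]; [Cplx] and Coquelicot's [C] are both [R * R]. *)
Module ComplexMonomials.
Import Coquelicot.Complex.
Local Open Scope C_scope.

Lemma Cinv_eq (z : Cplx) : Defs.Cinv z = / z.
Proof. destruct z as [x y]. unfold Defs.Cinv, Cinv; simpl. rewrite !Rmult_1_r. reflexivity. Qed.

Lemma Cpow_eq (z : Cplx) (n : nat) : Defs.Cpow z n = z ^ n.
Proof. induction n as [| n IH]; simpl; [reflexivity | rewrite IH; reflexivity]. Qed.

Lemma hrs2_E (q t : C) (r s : nat) : hrs2 q t r s = t ^ r / q ^ s + 2 + / (t ^ r / q ^ s).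
Proof. unfold hrs2. rewrite !Cinv_eq, !Cpow_eq. reflexivity. Qed.

Lemma Cplus_inv_eq (z w : C) : z <> 0 -> w <> 0 ->
  z + / z = w + / w -> z = w \/ z * w = 1.
Proof.
  intros Hz Hw E.
  assert (Hfact : (z - w) * (z * w - 1) = 0).
  { transitivity (z * w * ((z + / z) - (w + / w))); [field; auto | rewrite E; ring]. }
  destruct (classic (z = w)) as [Hzw | Hzw]; [left; exact Hzw | right].
  destruct (classic (z * w = 1)) as [H1 | H1]; [exact H1 | exfalso].
  apply (Cmult_neq_0 (z - w) (z * w - 1)); [| | exact Hfact].
  - intro H0. apply Hzw. replace z with (z - w + w) by ring. rewrite H0. ring.
  - intro H0. apply H1. replace (z * w) with (z * w - 1 + 1) by ring. rewrite H0. ring.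
Qed.

Lemma hrs2_eq_cases (q t : C) (r1 s1 r2 s2 : nat) : q <> 0 -> t <> 0 ->
  hrs2 q t r1 s1 = hrs2 q t r2 s2 ->
  t ^ r1 * q ^ s2 = t ^ r2 * q ^ s1 \/ t ^ (r1 + r2) * q ^ 0 = t ^ 0 * q ^ (s1 + s2).
Proof.
  intros Hq Ht E. rewrite !hrs2_E in E.
  set (z1 := t ^ r1 / q ^ s1) in E. set (z2 := t ^ r2 / q ^ s2) in E.
  assert (Hqs : forall s, q ^ s <> 0) by (intro; apply Cpow_nz, Hq).
  assert (Hz : forall r s, t ^ r / q ^ s <> 0).
  { intros r s H0. apply (Cpow_nz t r Ht).
    replace (t ^ r) with (t ^ r / q ^ s * q ^ s) by (field; apply Hqs).
    rewrite H0. ring. }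
  destruct (Cplus_inv_eq z1 z2) as [E' | E']; [apply Hz | apply Hz | | left | right].
  - replace (z1 + / z1) with (z1 + 2 + / z1 - 2) by ring. rewrite E. ring.
  - transitivity (z1 * (q ^ s1 * q ^ s2)); [unfold z1; field; apply Hqs |].
    rewrite E'. unfold z2. field. apply Hqs.
  - rewrite !Cpow_add_r. simpl Cpow.
    transitivity (z1 * z2 * (q ^ s1 * q ^ s2)); [unfold z1, z2; field; split; apply Hqs |].
    rewrite E'. ring.
Qed.

Local Close Scope C_scope.

Definition polar (r a : R) : C := (r * cos a, r * sin a).

Lemma polar_mul r a s b : (polar r a * polar s b)%C = polar (r * s) (a + b).
Proof. unfold Cmult, polar; simpl. rewrite cos_plus, sin_plus. f_equal; ring. Qed.

Lemma polar_pow r a n : (polar r a ^ n)%C = polar (r ^ n) (INR n * a).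
Proof.
  induction n as [| n IH].
  - unfold polar. simpl. rewrite Rmult_0_l, cos_0, sin_0. unfold RtoC. f_equal; ring.
  - rewrite <- tech_pow_Rmult. simpl Cpow. rewrite IH, polar_mul, S_INR.
    f_equal. ring.
Qed.

Lemma polar_inj r a s b : 0 < r -> 0 < s -> polar r a = polar s b ->
  r = s /\ exists k : Z, a - b = 2 * PI * IZR k.
Proof.
  intros Hr Hs E. unfold polar in E. injection E as Ec Es.
  assert (Ha := sin2_cos2 a). assert (Hb := sin2_cos2 b). unfold Rsqr in Ha, Hb.
  assert (Hrs : r = s).
  { assert (r * r = s * s); [| nra].
    transitivity ((r * cos a) * (r * cos a) + (r * sin a) * (r * sin a)); [nra |].
    rewrite Ec, Es. nra. }
  subst s. split; [reflexivity |].
  assert (Hcos : cos (2 * ((a - b) / 2)) = 1).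
  { replace (2 * ((a - b) / 2)) with (a - b) by field. rewrite cos_minus.
    replace (cos b) with (cos a) by (apply (Rmult_eq_reg_l r); lra).
    replace (sin b) with (sin a) by (apply (Rmult_eq_reg_l r); lra). lra. }
  rewrite cos_2a_sin in Hcos.
  destruct (sin_eq_0_0 ((a - b) / 2)) as [k Hk]; [nra |].
  exists k. lra.
Qed.

(* Equating modulus and argument of both sides turns a monomial identity into the integer
   relation [(A - C) ln r1 = (D - B) ln r2], [(A - C) a1 - (D - B) a2 = 2 pi k]. *)
Lemma polar_monomial_inj r1 a1 r2 a2 (A B C D : nat) : 0 < r1 -> 0 < r2 ->
  log_independent (ln r1) (ln r2) a1 a2 ->
  (polar r1 a1 ^ A * polar r2 a2 ^ B = polar r1 a1 ^ C * polar r2 a2 ^ D)%C ->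
  A = C /\ B = D.
Proof.
  intros H1 H2 Hind E. rewrite !polar_pow, !polar_mul in E.
  apply polar_inj in E; [| apply Rmult_lt_0_compat; apply pow_lt; assumption ..].
  destruct E as [Emod [k Earg]].
  assert (Hln : ln (r1 ^ A * r2 ^ B) = ln (r1 ^ C * r2 ^ D)) by (rewrite Emod; reflexivity).
  rewrite !ln_mult, !ln_pow in Hln by (try apply pow_lt; assumption).
  destruct (Hind (Z.of_nat A - Z.of_nat C) (Z.of_nat D - Z.of_nat B) k)%Z as [HA HB];
    rewrite ?minus_IZR, <- ?INR_IZR_INZ; [lra | lra | lia].
Qed.

End ComplexMonomials.

Theorem lemmaA7 (q t : Cplx) (argq argt : R) :
  q <> C0 -> t <> C0 ->
  ~ root_of_unity q -> ~ root_of_unity t ->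
  is_arg q argq -> is_arg t argt ->
  ( (Cnorm q <> 1 /\
       (~ is_rational (ln (Cnorm t) / ln (Cnorm q)) \/
        ~ in_2piQ (argt - argq * (ln (Cnorm t) / ln (Cnorm q)))))
    \/ (Cnorm q <> 1 /\ Cnorm t = 1 /\ ~ in_2piQ argt)
    \/ (Cnorm q = 1 /\ Cnorm t <> 1 /\ ~ in_2piQ argq) ) ->
  forall (h : Cplx) (r1 s1 r2 s2 : nat),
    inD q t h r1 s1 -> inD q t h r2 s2 -> r1 = r2 /\ s1 = s2.
Proof.
  intros Hq Ht _ _ [_ Hpolq] [_ Hpolt] Hcases h r1 s1 r2 s2 [Hr1 [_ E1]] [_ [_ E2]].
  assert (Hnq := Cnorm_pos q Hq). assert (Hnt := Cnorm_pos t Ht).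
  assert (Hind := log_independent_of_cases _ _ _ _ Hnq Hnt Hcases).
  rewrite E1 in E2.
  destruct (ComplexMonomials.hrs2_eq_cases q t r1 s1 r2 s2 Hq Ht E2) as [E | E];
    rewrite Hpolt, Hpolq in E;
    apply ComplexMonomials.polar_monomial_inj in E; try assumption; lia.
Qed.
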